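(* Let $G$ be a small category and $X$ a set with a partial category action by $G$. Let $\overline{X} = \{(g,x)\in{\rm mor}(G)\times X\mid d(g)\cdot x\text{ is defined}\}$ and let $\sim$ be the relation on $\overline{X}$ defined below. If $(g,x),(g',x')\in\overline{X}$ satisfy $(g,x)\sim(g',x')$, then for every $p\in{\rm mor}(G)$ with $(p,g),(p,g')\in G^2$ we have $(pg,x)\sim(pg',x')$.
   Context: Conventions: $G$ is a small category; objects are identified with their identity morphisms, so ${\rm ob}(G)\subseteq{\rm mor}(G)$; $d(g), c(g)$ are domain and codomain, $G^2=\{(g,h)\mid d(g)=c(h)\}$. A partial category action by $G$ on $X$ is a partial function ${\rm mor}(G)\times X\to X$, $(g,x)\mapsto g\cdot x$ where defined, such that: (C1) for every $x$ there is $e\in{\rm ob}(G)$ with $e\cdot x$ defined, and whenever $f\in{\rm ob}(G)$ and $f\cdot x$ is defined, $f\cdot x=x$; (C2) if $g\cdot x$ is defined then $d(g)\cdot x$ is defined; (C3) if $(g,h)\in G^2$ and $h\cdot x$ is defined, then $(gh)\cdot x$ is defined iff $g\cdot(h\cdot x)$ is defined, and then they are equal. The relation $\sim$ on $\overline{X}$: $(g,x)\sim(g',x')$ if either (i) there is $h\in{\rm mor}(G)$ with $(g',h)\in G^2$, $h\cdot x$ defined, $g = g'h$ and $x' = h\cdot x$; or (ii) $x = x'$, $g,g'\in{\rm ob}(G)$, and both $g\cdot x$ and $g'\cdot x'$ are defined. *)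

(* Small categories presented by their set of morphisms,
   objects identified with identity morphisms. *)
From Stdlib Require Import Classical.

Record SmallCategory := {
  Mor : Type;
  is_ob : Mor -> Prop;
  dom : Mor -> Mor;
  cod : Mor -> Mor;
  (* composition g h (= g ∘ h); only meaningful when dom g = cod h *)
  comp : Mor -> Mor -> Mor;
  dom_ob : forall g, is_ob (dom g);
  cod_ob : forall g, is_ob (cod g);
  ob_dom : forall e, is_ob e -> dom e = e;
  ob_cod : forall e, is_ob e -> cod e = e;
  comp_dom : forall g h, dom g = cod h -> dom (comp g h) = dom h;
  comp_cod : forall g h, dom g = cod h -> cod (comp g h) = cod g;
  comp_id_l : forall g, comp (cod g) g = g;
  comp_id_r : forall g, comp g (dom g) = g;
  comp_assoc : forall f g h, dom f = cod g -> dom g = cod h ->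
      comp f (comp g h) = comp (comp f g) h
}.

Arguments is_ob {_}. Arguments dom {_}. Arguments cod {_}. Arguments comp {_}.

Definition composable {G : SmallCategory} (g h : Mor G) : Prop := dom g = cod h.

(* A partial function mor(G) × X → X, given as act g x = Some (g·x) when defined. *)
Definition defined {G : SmallCategory} {X : Type}
  (act : Mor G -> X -> option X) (g : Mor G) (x : X) : Prop :=
  exists y, act g x = Some y.

Definition is_partial_category_action (G : SmallCategory) (X : Type)
  (act : Mor G -> X -> option X) : Prop :=
  (forall x, (exists e, is_ob e /\ defined act e x) /\
             (forall f, is_ob f -> defined act f x -> act f x = Some x)) /\
  (forall g x, defined act g x -> defined act (dom g) x) /\
  (forall g h x y, composable g h -> act h x = Some y ->
      (defined act (comp g h) x <-> defined act g y) /\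
      (defined act (comp g h) x -> act (comp g h) x = act g y)).

Definition in_Xbar {G : SmallCategory} {X : Type}
  (act : Mor G -> X -> option X) (g : Mor G) (x : X) : Prop :=
  defined act (dom g) x.

Definition sim_rel {G : SmallCategory} {X : Type}
  (act : Mor G -> X -> option X) (g : Mor G) (x : X) (g' : Mor G) (x' : X) : Prop :=
  (exists h, composable g' h /\ defined act h x /\ g = comp g' h /\ act h x = Some x')
  \/ (x = x' /\ is_ob g /\ is_ob g' /\ defined act g x /\ defined act g' x').


(* A witness [h] for the first clause of [~] stays a witness after composing
   both morphisms with [p], by associativity.  In the second clause [g] and
   [g'] are identities parallel to [dom p], hence equal, so [pg = pg' = p] and
   [g] itself is a witness of the first clause because [g·x = x]. *)

Section Category.

Variable G : SmallCategory.

Lemma ob_eq_of_cod_eq (e e' : Mor G) :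
  is_ob e -> is_ob e' -> cod e = cod e' -> e = e'.
Proof. intros He He' Hcod. now rewrite <- (ob_cod G e He), <- (ob_cod G e' He'). Qed.

Lemma comp_ob_r (p e : Mor G) : is_ob e -> composable p e -> comp p e = p.
Proof.
  intros He Hpe. unfold composable in Hpe.
  rewrite <- (ob_cod G e He), <- Hpe at 1. apply comp_id_r.
Qed.

Lemma composable_comp_l (p g h : Mor G) :
  composable p g -> composable g h -> composable (comp p g) h.
Proof. unfold composable. intros Hpg Hgh. now rewrite comp_dom. Qed.

End Category.

Section PartialAction.

Variables (G : SmallCategory) (X : Type) (act : Mor G -> X -> option X).

Definition fixes_objects : Prop :=
  forall e x, is_ob e -> defined act e x -> act e x = Some x.

Lemma fixes_objects_of_action :
  is_partial_category_action G X act -> fixes_objects.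
Proof. intros [HC1 _] e x He Hd. now apply (proj2 (HC1 x)). Qed.

Lemma sim_rel_of_factor (g g' h : Mor G) (x x' : X) :
  composable g' h -> g = comp g' h -> act h x = Some x' ->
  sim_rel act g x g' x'.
Proof.
  intros Hg'h Hg Hhx. left. exists h.
  repeat split; try assumption. now exists x'.
Qed.

Lemma sim_rel_comp_l (g g' p : Mor G) (x x' : X) :
  fixes_objects -> sim_rel act g x g' x' ->
  composable p g -> composable p g' ->
  sim_rel act (comp p g) x (comp p g') x'.
Proof.
  intros Hfix Hsim Hpg Hpg'.
  destruct Hsim as [[h [Hg'h [_ [Hg Hhx]]]] | [<- [Hg [Hg' [Hgx _]]]]].
  - apply sim_rel_of_factor with h; [now apply composable_comp_l | | exact Hhx].
    subst g. now apply comp_assoc.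
  - assert (Hgg' : g = g') by (apply ob_eq_of_cod_eq; congruence).
    subst g'.
    apply sim_rel_of_factor with g.
    + apply composable_comp_l; [exact Hpg |].
      unfold composable. now rewrite (ob_dom G g Hg), (ob_cod G g Hg).
    + now rewrite !(comp_ob_r G p g Hg Hpg).
    + now apply Hfix.
Qed.

End PartialAction.

Theorem proposition3p6 (G : SmallCategory) (X : Type)
  (act : Mor G -> X -> option X)
  (Hact : is_partial_category_action G X act)
  (g : Mor G) (x : X) (g' : Mor G) (x' : X)
  (Hgx : in_Xbar act g x) (Hgx' : in_Xbar act g' x')
  (Hsim : sim_rel act g x g' x') :
  forall p : Mor G, composable p g -> composable p g' ->
    sim_rel act (comp p g) x (comp p g') x'.
Proof.
  intros p Hpg Hpg'.
  apply sim_rel_comp_l; try assumption.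
  now apply fixes_objects_of_action.
Qed.
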